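(* Let $(\mathbf x,B)$ be a seed of $\mathcal F$ and assume that the cluster monomials of $\mathcal A(\mathbf x,B)$ are linearly independent over $K$. Let $(\mathbf y,C)$ be a seed mutation equivalent to $(\mathbf x,B)$ and let $(\mathbf z,D)=\mu_n\cdots\mu_2\mu_1(\mathbf y,C)$. Then the clusters $\mathbf y$ and $\mathbf z$ are disjoint, i.e. $\{y_1,\dots,y_n\}\cap\{z_1,\dots,z_n\}=\varnothing$.
   Context: Let $K$ be a field of characteristic $0$ or $K=\mathbb Z$. Fix integers $m\ge p\ge n\ge 1$ with $m>1$, and let $\mathcal F=K(X_1,\dots,X_m)$. For $B=(b_{ij})\in M_{m,n}(\mathbb Z)$ the principal part $B^\circ$ is the $n\times n$ matrix formed by the first $n$ rows. $B$ is connected if the graph with vertices $1,\dots,m$ and an edge between $i$ and $j$ whenever $b_{ij}\neq 0$ or $b_{ji}\ne 0$ is connected. A square integer matrix $A$ is skew-symmetrizable if $DA$ is skew-symmetric for some diagonal integer matrix $D$ with positive diagonal entries. A seed of $\mathcal F$ is a pair $(\mathbf x,B)$ where $B\in M_{m,n}(\mathbb Z)$ is connected with $B^\circ$ skew-symmetrizable, and $\mathbf x=(x_1,\dots,x_m)$ is an $m$-tuple of elements of $\mathcal F$ algebraically independent over $K$. For $1\le k\le n$ the mutation $\mu_k(\mathbf x,B)=(\mathbf x',B')$ is given by $b'_{ij}=-b_{ij}$ if $i=k$ or $j=k$, and $b'_{ij}=b_{ij}+\frac{|b_{ik}|b_{kj}+b_{ik}|b_{kj}|}{2}$ otherwise;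 $x'_s=x_s$ for $s\neq k$ and $x'_k=x_k^{-1}\big(\prod_{b_{ik}>0}x_i^{b_{ik}}+\prod_{b_{ik}<0}x_i^{-b_{ik}}\big)$. Two seeds are mutation equivalent if one is obtained from the other by a finite sequence of mutations $\mu_{i_1},\dots,\mu_{i_t}$ with $1\le i_j\le n$. The cluster algebra $\mathcal A(\mathbf x,B)$ is the $K$-subalgebra of $\mathcal F$ generated by $x_{n+1}^{\pm1},\dots,x_p^{\pm1},x_{p+1},\dots,x_m$ together with all elements $y_1,\dots,y_n$ for all seeds $(\mathbf y,C)$ mutation equivalent to $(\mathbf x,B)$; for such a seed, $\mathbf y$ is a cluster, and the elements $y_1^{a_1}\cdots y_m^{a_m}$ with all $a_i\ge 0$ (over all clusters $\mathbf y$) are the cluster monomials. *)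

From HB Require Import structures.
From mathcomp Require Import all_boot all_order all_algebra.
From mathcomp Require Import fraction.
From mathcomp.multinomials Require Import mpoly.
Set Implicit Arguments. Unset Strict Implicit. Unset Printing Implicit Defensive.
Import Order.TTheory GRing.Theory Num.Theory.
Local Open Scope ring_scope.

Notation ratfun K m := {fraction {mpoly K[m]}}.

Section ClusterDefs.
Variables (K : idomainType) (m n : nat).
Local Notation F := (ratfun K m).

Definition kemb (c : K) : F := tofrac (c%:MP_[m]).

(* seeds: pairs (x, B) with x : 'I_m -> F (x_i = x (i-1)) and B an m x n
   integer matrix; indices are 0-based *)
Definition seedT := (('I_m -> F) * 'M[int]_(m, n))%type.

(* entry b_{ij} for i, j in {1..m}; 0 when j > n (undefined in the paper,
   only used so that "b_ij <> 0 or b_ji <> 0" reads as in the paper) *)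
Definition bent (B : 'M[int]_(m, n)) (i j : 'I_m) : int :=
  match (insub (val j) : option 'I_n) with
  | Some j' => B i j'
  | None => 0
  end.

Definition connected_mx (B : 'M[int]_(m, n)) : Prop :=
  forall i j : 'I_m,
    connect (fun a b => (bent B a b != 0) || (bent B b a != 0)) i j.

Definition principal_part (B : 'M[int]_(m, n)) (le_nm : (n <= m)%N) : 'M[int]_n :=
  \matrix_(i < n, j < n) B (widen_ord le_nm i) j.

Definition skew_symmetrizable (A : 'M[int]_n) : Prop :=
  exists d : 'I_n -> int, (forall i, 0 < d i) /\
    forall i j, d i * A i j = - (d j * A j i).

Definition alg_indep (x : 'I_m -> F) : Prop :=
  forall P : {mpoly K[m]}, mmap kemb x P = 0 -> P = 0.

Definition is_seed (le_nm : (n <= m)%N) (S : seedT) : Prop :=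
  connected_mx S.2 /\ skew_symmetrizable (principal_part S.2 le_nm)
  /\ alg_indep S.1.

Definition mutate_mx (le_nm : (n <= m)%N) (k : 'I_n) (B : 'M[int]_(m, n))
  : 'M[int]_(m, n) :=
  \matrix_(i < m, j < n)
    if (val i == val k) || (j == k) then - B i j
    else B i j + ((`|B i k| * B (widen_ord le_nm k) j
                   + B i k * `|B (widen_ord le_nm k) j|) %/ 2)%Z.

Definition mutate_cl (k : 'I_n) (x : 'I_m -> F) (B : 'M[int]_(m, n))
  : 'I_m -> F :=
  fun s => if val s == val k then
    (x s)^-1 * (\prod_(i < m | 0 < B i k) x i ^+ `|B i k|%N
              + \prod_(i < m | B i k < 0) x i ^+ `|B i k|%N)
  else x s.

Definition mutate (le_nm : (n <= m)%N) (k : 'I_n) (S : seedT) : seedT :=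
  (mutate_cl k S.1 S.2, mutate_mx le_nm k S.2).

(* mutations applied in the order of the list: mutates [:: k1; ...; kt] S
   = mu_kt ... mu_k1 S *)
Definition mutates (le_nm : (n <= m)%N) (s : seq 'I_n) (S : seedT) : seedT :=
  foldl (fun T k => mutate le_nm k T) S s.

Definition mut_equiv (le_nm : (n <= m)%N) (S T : seedT) : Prop :=
  exists s : seq 'I_n, T = mutates le_nm s S.

Definition cluster_monomial (le_nm : (n <= m)%N) (S : seedT) (u : F) : Prop :=
  exists (T : seedT) (a : 'I_m -> nat),
    mut_equiv le_nm S T /\ u = \prod_(i < m) T.1 i ^+ a i.

Definition K_lin_indep (P : F -> Prop) : Prop :=
  forall (s : seq F) (c : F -> K), uniq s -> (forall u, u \in s -> P u) ->
    \sum_(u <- s) kemb (c u) * u = 0 -> forall u, u \in s -> c u = 0.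

Definition prop43_for : Prop :=
  forall (p : nat) (le_nm : (n <= m)%N), (p <= m)%N -> (n <= p)%N -> (1 <= n)%N ->
    (1 < m)%N ->
  forall S : seedT, is_seed le_nm S ->
  K_lin_indep (cluster_monomial le_nm S) ->
  forall T : seedT, mut_equiv le_nm S T ->
  let U := mutates le_nm (enum 'I_n) T in
  forall i j : 'I_n, T.1 (widen_ord le_nm i) != U.1 (widen_ord le_nm j).

End ClusterDefs.

From HB Require Import structures.
From mathcomp Require Import all_boot all_order all_algebra.
From mathcomp Require Import fraction.
From mathcomp.multinomials Require Import mpoly.
Set Implicit Arguments. Unset Strict Implicit. Unset Printing Implicit Defensive.
Import GRing.Theory.
Local Open Scope ring_scope.

(* Suppose y_i = z_j.  The mutations before mu_j in mu_n ... mu_1 do not touch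
   position j, so z_j is obtained from y_j = w_j of an intermediate seed
   (w, E) by a single exchange: y_j z_j = P_1 + P_2 with P_1, P_2 cluster
   monomials of w.  Hence y_i y_j - P_1 - P_2 = 0 is a linear relation among
   cluster monomials whose coefficients sum to -1, so it cannot be trivial even
   if some of the three monomials coincide; y_j <> 0 because y_j^2 is a
   cluster monomial. *)

Section LinearIndependence.
Variables (K : idomainType) (m : nat).
Local Notation F := (ratfun K m).

HB.instance Definition _ :=
  GRing.RMorphism.copy (@kemb K m) (@tofrac _ \o @mpolyC m K).

Lemma K_lin_indep_sum_coef (P : F -> Prop) (L : seq (K * F)) :
  K_lin_indep P -> (forall v, v \in L -> P v.2) ->
  \sum_(v <- L) kemb m v.1 * v.2 = 0 -> \sum_(v <- L) v.1 = 0.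
Proof.
move=> indepP PL relL; pose s := undup (map snd L).
pose c u := \sum_(v <- L | v.2 == u) v.1.
have group_by_value (V : nmodType) (g : K * F -> V) :
    \sum_(u <- s) \sum_(v <- L | v.2 == u) g v = \sum_(v <- L) g v.
  under eq_bigr do rewrite big_mkcond.
  rewrite exchange_big /=; apply: eq_big_seq => v vL.
  rewrite -big_mkcond -big_filter.
  have -> : [seq u <- s | v.2 == u] = [:: v.2].
    rewrite (eq_filter (a2 := pred1 v.2)); last by move=> u; rewrite /= eq_sym.
    by apply: filter_pred1_uniq; rewrite ?undup_uniq // mem_undup map_f.
  by rewrite big_seq1.
have c0 : forall u, u \in s -> c u = 0.
  apply: indepP (undup_uniq _) _ _.
  - by move=> u; rewrite mem_undup => /mapP[v vL ->]; apply: PL.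
  - apply: etrans relL; rewrite -(group_by_value _ (fun v => kemb m v.1 * v.2)).
    apply: eq_bigr => u _; rewrite rmorph_sum mulr_suml.
    by apply: eq_bigr => v /eqP ->.
by rewrite -(group_by_value _ fst) big_seq big1.
Qed.

Lemma K_lin_indep_neq0 (P : F -> Prop) (u : F) :
  K_lin_indep P -> P u -> u != 0.
Proof.
move=> indepP Pu; apply/eqP => u0.
have PL : forall x, x \in [:: (1 : K, u)] -> P x.2.
  by move=> x; rewrite mem_seq1 => /eqP->.
have relL : \sum_(x <- [:: (1 : K, u)]) kemb m x.1 * x.2 = 0.
  by rewrite big_seq1 u0 mulr0.
by have /eqP := K_lin_indep_sum_coef indepP PL relL; rewrite big_seq1 oner_eq0.
Qed.

Lemma K_lin_indep_neq_add (P : F -> Prop) (u v w : F) :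
  K_lin_indep P -> P u -> P v -> P w -> u != v + w.
Proof.
move=> indepP Pu Pv Pw; apply/eqP => uvw.
pose L := [:: (1 : K, u); (-1, v); (-1, w)].
have PL : forall x, x \in L -> P x.2 by move=> x; rewrite !inE => /or3P[]/eqP->.
have relL : \sum_(x <- L) kemb m x.1 * x.2 = 0.
  rewrite !big_cons big_nil /= rmorph1 rmorphN1 !mul1r !mulN1r uvw addr0.
  by rewrite addrACA !subrr addr0.
have /eqP := K_lin_indep_sum_coef indepP PL relL.
by rewrite !big_cons big_nil /= addr0 addrA subrr sub0r oppr_eq0 oner_eq0.
Qed.

End LinearIndependence.

Section Mutations.
Variables (K : idomainType) (m n : nat) (le_nm : (n <= m)%N).
Local Notation F := (ratfun K m).
Local Notation mutates := (mutates le_nm).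
Local Notation widen := (widen_ord le_nm).

Lemma mutates_cat (s1 s2 : seq 'I_n) (S : seedT K m n) :
  mutates (s1 ++ s2) S = mutates s2 (mutates s1 S).
Proof. exact: foldl_cat. Qed.

Lemma mut_equiv_mutates (S T : seedT K m n) (s : seq 'I_n) :
  mut_equiv le_nm S T -> mut_equiv le_nm S (mutates s T).
Proof. by case=> s0 ->; exists (s0 ++ s); rewrite mutates_cat. Qed.

Lemma mutates_cl_notin (s : seq 'I_n) (S : seedT K m n) (j : 'I_n) :
  j \notin s -> (mutates s S).1 (widen j) = S.1 (widen j).
Proof.
elim: s S => [|k s IH] S //; rewrite in_cons negb_or => /andP[jk js].
by rewrite -cat1s mutates_cat IH //= /mutate_cl /= val_eqE (negbTE jk).
Qed.

Lemma mutates_cl_uniq (r : seq 'I_n) (T : seedT K m n) (j : 'I_n) :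
  uniq r -> j \in r -> exists s, let W := mutates s T in
    W.1 (widen j) = T.1 (widen j)
    /\ (mutates r T).1 (widen j) = mutate_cl j W.1 W.2 (widen j).
Proof.
move=> uniq_r /splitPr j_r; case: j_r uniq_r => s1 s2.
rewrite cat_uniq /= => /and3P[_ /norP[js1 _] /andP[js2 _]].
exists s1; split; first exact: mutates_cl_notin.
by rewrite mutates_cat -cat1s mutates_cat mutates_cl_notin.
Qed.

Lemma mutate_cl_exchange (j : 'I_n) (x : 'I_m -> F) (B : 'M[int]_(m, n)) :
  x (widen j) != 0 ->
  x (widen j) * mutate_cl j x B (widen j) =
    \prod_(i < m | 0 < B i j) x i ^+ `|B i j|%N
    + \prod_(i < m | B i j < 0) x i ^+ `|B i j|%N.
Proof. by move=> xj0; rewrite /mutate_cl eqxx mulrA mulfV // mul1r. Qed.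

Lemma cluster_monomial_prod (S T : seedT K m n) (Q : pred 'I_m) (e : 'I_m -> nat) :
  mut_equiv le_nm S T ->
  cluster_monomial le_nm S (\prod_(i < m | Q i) T.1 i ^+ e i).
Proof.
move=> ST; exists T, (fun i => if Q i then e i else 0%N); split => //.
by rewrite big_mkcond; apply: eq_bigr => i _; case: (Q i).
Qed.

Lemma cluster_monomial_mul (S T : seedT K m n) (a b : 'I_m) :
  mut_equiv le_nm S T -> cluster_monomial le_nm S (T.1 a * T.1 b).
Proof.
move=> ST; exists T, (fun i => (i == a) + (i == b))%N; split => //.
rewrite (eq_bigr _ (fun i _ => exprD _ _ _)) big_split /=.
have single c : \prod_(i < m) T.1 i ^+ (i == c) = T.1 c.
  by rewrite (bigD1 c) //= eqxx big1 ?mulr1 // => i /negbTE ->.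
by rewrite !single.
Qed.

End Mutations.

Lemma prop43_for_idomain (K : idomainType) (m n : nat) : prop43_for K m n.
Proof.
move=> p le_nm _ _ _ _ S _ indepS T ST U i j; rewrite {}/U; apply/eqP => yi_zj.
have [s [/= Wj zjE]] := mutates_cl_uniq le_nm T (enum_uniq 'I_n) (mem_enum _ j).
set W := mutates le_nm s T in Wj zjE.
have SW : mut_equiv le_nm S W by apply: mut_equiv_mutates.
have wj0 : W.1 (widen_ord le_nm j) != 0.
  have yj2 := cluster_monomial_mul (widen_ord le_nm j) (widen_ord le_nm j) ST.
  by have := K_lin_indep_neq0 indepS yj2; rewrite mulf_eq0 orbb Wj.
have := mutate_cl_exchange W.2 wj0.
rewrite -zjE -yi_zj Wj mulrC; apply/eqP/(K_lin_indep_neq_add indepS).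
- exact: cluster_monomial_mul.
- exact: cluster_monomial_prod.
- exact: cluster_monomial_prod.
Qed.

Theorem proposition4p3 :
  (forall (K : fieldType) (m n : nat), [pchar K]%R =i pred0 -> prop43_for K m n)
  /\ (forall m n : nat, prop43_for int m n).
Proof.
by split=> [K m n _ | m n]; apply: prop43_for_idomain.
Qed.
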